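(* Consider the linear MTE model ($M=1$, $h_1(u)=u-\frac12$) and fixed weights $(c_\mu,c_\rho)\ne(0,0)$, $c=(c_\mu,c_\rho,-c_\mu,-c_\rho)'$. For $(\theta,F)\in\mathcal P$ let $\lambda=c'\theta$ and $$S=[\partial_pg(\lambda)]\Sigma_p[\partial_pg(\lambda)]'+[\partial_{\beta_1}g(\lambda)]\Sigma_{\beta_1}[\partial_{\beta_1}g(\lambda)]'+[\partial_{\beta_0}g(\lambda)]\Sigma_{\beta_0}[\partial_{\beta_0}g(\lambda)]'.$$ Then $\inf_{(\theta,F)\in\mathcal P}\lambda_{\min}(S)>0$ and $\sup_{(\theta,F)\in\mathcal P}\lambda_{\max}(S)<\infty$, where $\lambda_{\min},\lambda_{\max}$ denote the smallest and largest eigenvalues.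
   Context: General MTE setup. Observables are $(Y,D,Z)$ with $Y\in\mathbb R$, $D\in\{0,1\}$, $Z$ discrete with support $\{z_0,\dots,z_K\}$. Fix an integer $M\ge1$ and known continuous functions $h_1,\dots,h_M$ on $(0,1)$; set $\lambda_{10}=\lambda_{00}\equiv1$ and for $m=1,\dots,M$, $p\in(0,1)$: $\lambda_{1m}(p)=\frac1p\int_0^p h_m(u)du$, $\lambda_{0m}(p)=\frac1{1-p}\int_p^1 h_m(u)du$. For $p=(p(z_0),\dots,p(z_K))'\in(0,1)^{K+1}$ let $A_d(p)$ be the $(K+1)\times(M+1)$ matrix with $(\ell,m)$ entry $\lambda_{dm}(p(z_\ell))$ ($\ell=0,\dots,K$; $m=0,\dots,M$), and $A(p)=\mathrm{diag}(A_1(p),A_0(p))\in\mathbb R^{2(K+1)\times 2(M+1)}$. Parameters: $\theta=(\theta_1',\theta_0')'$, $\theta_d=(\theta_{d0},\dots,\theta_{dM})'=(\mu_d,\rho_{d1},\dots,\rho_{dM})'$. For a distribution $F$ of $(Y,D,Z)$: $q_F(z_\ell)=P_F(Z=z_\ell)$, $p_F(z_\ell)=P_F(D=1\mid Z=z_\ell)$, $p_F=(p_F(z_0),\dots,p_F(z_K))'$, $q_F(1,z_\ell)=p_F(z_\ell)q_F(z_\ell)$, $q_F(0,z_\ell)=(1-p_F(z_\ell))q_F(z_\ell)$, $\beta_{F,d\ell}=E_F[Y\mid D=d,Z=z_\ell]$, $\beta_{F,d}=(\beta_{F,d0},\dots,\beta_{F,dK})'$, $\beta_F=(\beta_{F,1}',\beta_{F,0}')'$,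 $\sigma^2_{F,d\ell}=\mathrm{Var}_F(Y\mid D=d,Z=z_\ell)$, $A_F=A(p_F)$. Parameter space: fix $\delta,\zeta>0$, $\epsilon\in(0,1/2)$ and a compact $\Theta\subset\mathbb R^{2(M+1)}$ with nonempty interior. $\mathcal P$ is the set of pairs $(\theta,F)$ such that (i) $K\ge M$, $\theta\in\mathrm{int}(\Theta)$ and $A_F\theta=\beta_F$; (ii) $\sup_{d\in\{0,1\}}\sup_{\ell}E_F[|Y|^{2+\delta}\mid D=d,Z=z_\ell]\le\zeta$; (iii) $\epsilon\le p_F(z_\ell)\le 1-\epsilon$ for all $\ell$; (iv) $\epsilon\le q_F(z_\ell)\le1-\epsilon$ for all $\ell$; (v) $\sigma^2_{F,d\ell}\ge\epsilon$ for all $d,\ell$. Linear MTE moments. With $M=1$, $h_1(u)=u-\frac12$ and $c=(c_\mu,c_\rho,-c_\mu,-c_\rho)'$, for $k=1,\dots,K$ and given $(p,\beta)$ define $\Delta_\mu(z_0,z_k)=p(z_k)[\beta_{10}-\beta_{00}]-p(z_0)[\beta_{1k}-\beta_{0k}]+\beta_{1k}-\beta_{10}$, $\Delta_\rho(z_0,z_k)=2(\beta_{00}-\beta_{10}+\beta_{1k}-\beta_{0k})$ and $g_k(\lambda)=[p(z_k)-p(z_0)]\lambda-c_\mu\Delta_\mu(z_0,z_k)-c_\rho\Delta_\rho(z_0,z_k)$, viewed as a function of $(\lambda,p,\beta_1,\beta_0)$; $g(\lambda)=(g_1(\lambda),\dots,g_K(\lambda))'$. In this lemma, $\partial_xg(\lambda)$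 for $x\in\{p,\beta_1,\beta_0\}$ is the $K\times(K+1)$ Jacobian of $g(\lambda)$ with respect to $x$ evaluated at $(p_F,\beta_{F,1},\beta_{F,0})$; $\Sigma_p=\mathrm{diag}\{p_F(z_\ell)(1-p_F(z_\ell))/q_F(z_\ell)\}_\ell$ and $\Sigma_{\beta_d}=\mathrm{diag}\{\sigma^2_{F,d\ell}/q_F(d,z_\ell)\}_\ell$. *)

From HB Require Import structures.
From mathcomp Require Import all_boot all_order all_algebra.
From mathcomp Require Import all_classical all_reals all_analysis.
Set Implicit Arguments. Unset Strict Implicit. Unset Printing Implicit Defensive.
Import Order.TTheory GRing.Theory Num.Theory.
Import numFieldTopology.Exports numFieldNormedType.Exports.
Local Open Scope classical_set_scope.
Local Open Scope ring_scope.

(* A distribution F of (Y,D,Z), Z with support {z_0,...,z_K} (indexed  *)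
(* by 'I_K.+1), D in {0,1} (bool, true = 1), Y real, is described by   *)
(*   qZ l      = P_F(Z = z_l)                                            *)
(*   pZ l      = P_F(D = 1 | Z = z_l)                                    *)
(*   lawY d l  = law of Y given D = d, Z = z_l  (a probability on R).    *)
Record mte_dist (R : realType) (K : nat) := MteDist {
  qZ : 'I_K.+1 -> R ;
  pZ : 'I_K.+1 -> R ;
  lawY : bool -> 'I_K.+1 -> probability R R }.

Definition is_dist (R : realType) (K : nat) (F : mte_dist R K) : Prop :=
  (forall l, 0 <= qZ F l) /\ \sum_l qZ F l = 1 /\
  (forall l, 0 <= pZ F l <= 1).

Definition qDZ (R : realType) (K : nat) (F : mte_dist R K) (d : bool)
    (l : 'I_K.+1) : R :=
  if d then pZ F l * qZ F l else (1 - pZ F l) * qZ F l.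

Definition betaF (R : realType) (K : nat) (F : mte_dist R K) (d : bool)
    (l : 'I_K.+1) : R :=
  fine (\int[lawY F d l]_y (y%:E)).

Definition sigma2F (R : realType) (K : nat) (F : mte_dist R K) (d : bool)
    (l : 'I_K.+1) : R :=
  fine (\int[lawY F d l]_y (((y - betaF F d l) ^+ 2)%:E)).

Definition momentF (R : realType) (K : nat) (F : mte_dist R K) (delta : R)
    (d : bool) (l : 'I_K.+1) : \bar R :=
  \int[lawY F d l]_y ((`|y| `^ (2 + delta))%:E).

(* Linear MTE: M = 1, h_1(u) = u - 1/2.  lambda_{10} = lambda_{00} = 1,
   lambda_{11}(p) = (1/p) int_0^p (u - 1/2) du = (p - 1)/2,
   lambda_{01}(p) = (1/(1-p)) int_p^1 (u - 1/2) du = p/2. *)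
Definition lam11 (R : realType) (p : R) : R := (p - 1) / 2.
Definition lam01 (R : realType) (p : R) : R := p / 2.

Definition A1mx (R : realType) (K : nat) (p : 'I_K.+1 -> R) : 'M[R]_(K.+1, 2) :=
  \matrix_(l < K.+1, m < 2) (if m == ord0 then 1 else lam11 (p l)).
Definition A0mx (R : realType) (K : nat) (p : 'I_K.+1 -> R) : 'M[R]_(K.+1, 2) :=
  \matrix_(l < K.+1, m < 2) (if m == ord0 then 1 else lam01 (p l)).
Definition Amx (R : realType) (K : nat) (p : 'I_K.+1 -> R)
    : 'M[R]_(K.+1 + K.+1, 2 + 2) :=
  block_mx (A1mx p) 0 0 (A0mx p).

Definition betavec (R : realType) (K : nat) (F : mte_dist R K)
    : 'cV[R]_(K.+1 + K.+1) :=
  col_mx (\col_l betaF F true l) (\col_l betaF F false l).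

(* theta = (mu_1, rho_1, mu_0, rho_0)' ;  c = (c_mu, c_rho, -c_mu, -c_rho)' *)
Definition cvec (R : realType) (cmu crho : R) : 'cV[R]_(2 + 2) :=
  col_mx (\col_(m < 2) (if m == ord0 then cmu else crho))
         (\col_(m < 2) (if m == ord0 then - cmu else - crho)).

Definition lamc (R : realType) (cmu crho : R) (theta : 'cV[R]_(2 + 2)) : R :=
  ((cvec cmu crho)^T *m theta) ord0 ord0.

Definition inP (R : realType) (K : nat) (delta zeta eps : R)
    (Theta : set 'cV[R]_(2 + 2)) (theta : 'cV[R]_(2 + 2)) (F : mte_dist R K)
    : Prop :=
  is_dist F /\
  (1 <= K)%N /\ (Theta°) theta /\ Amx (pZ F) *m theta = betavec F /\
  (forall d l, (momentF F delta d l <= zeta%:E)%E) /\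
  (forall l, eps <= pZ F l <= 1 - eps) /\
  (forall l, eps <= qZ F l <= 1 - eps) /\
  (forall d l, (eps%:E <= \int[lawY F d l]_y (((y - betaF F d l) ^+ 2)%:E))%E).

(* The moment functions g_k, k = 1..K (k : 'I_K stands for index k+1). *)
Definition Delta_mu (R : realType) (K : nat) (p b1 b0 : 'I_K.+1 -> R)
    (k : 'I_K) : R :=
  let kk := lift ord0 k in
  p kk * (b1 ord0 - b0 ord0) - p ord0 * (b1 kk - b0 kk) + b1 kk - b1 ord0.

Definition Delta_rho (R : realType) (K : nat) (p b1 b0 : 'I_K.+1 -> R)
    (k : 'I_K) : R :=
  let kk := lift ord0 k in
  2 * (b0 ord0 - b1 ord0 + b1 kk - b0 kk).

Definition gk (R : realType) (K : nat) (cmu crho : R) (k : 'I_K) (lam : R)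
    (p b1 b0 : 'I_K.+1 -> R) : R :=
  (p (lift ord0 k) - p ord0) * lam - cmu * Delta_mu p b1 b0 k
    - crho * Delta_rho p b1 b0 k.

Definition upd (R : realType) (K : nat) (f : 'I_K.+1 -> R) (l : 'I_K.+1) (t : R)
    : 'I_K.+1 -> R :=
  fun j => if j == l then t else f j.

Definition Jp (R : realType) (K : nat) (cmu crho lam : R) (p b1 b0 : 'I_K.+1 -> R)
    : 'M[R]_(K, K.+1) :=
  \matrix_(k < K, l < K.+1)
    derive1 (fun t : R => gk cmu crho k lam (upd p l t) b1 b0) (p l).
Definition Jb1 (R : realType) (K : nat) (cmu crho lam : R) (p b1 b0 : 'I_K.+1 -> R)
    : 'M[R]_(K, K.+1) :=
  \matrix_(k < K, l < K.+1)
    derive1 (fun t : R => gk cmu crho k lam p (upd b1 l t) b0) (b1 l).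
Definition Jb0 (R : realType) (K : nat) (cmu crho lam : R) (p b1 b0 : 'I_K.+1 -> R)
    : 'M[R]_(K, K.+1) :=
  \matrix_(k < K, l < K.+1)
    derive1 (fun t : R => gk cmu crho k lam p b1 (upd b0 l t)) (b0 l).

Definition Sigma_p (R : realType) (K : nat) (F : mte_dist R K) : 'M[R]_K.+1 :=
  diag_mx (\row_l (pZ F l * (1 - pZ F l) / qZ F l)).
Definition Sigma_b (R : realType) (K : nat) (F : mte_dist R K) (d : bool)
    : 'M[R]_K.+1 :=
  diag_mx (\row_l (sigma2F F d l / qDZ F d l)).

Definition Smat (R : realType) (K : nat) (cmu crho : R) (theta : 'cV[R]_(2 + 2))
    (F : mte_dist R K) : 'M[R]_K :=
  let lam := lamc cmu crho theta in
  let p := pZ F in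
  let b1 := betaF F true in
  let b0 := betaF F false in
  let J1 := Jp cmu crho lam p b1 b0 in
  let J2 := Jb1 cmu crho lam p b1 b0 in
  let J3 := Jb0 cmu crho lam p b1 b0 in
  J1 *m Sigma_p F *m J1^T + J2 *m Sigma_b F true *m J2^T
    + J3 *m Sigma_b F false *m J3^T.

From HB Require Import structures.
From mathcomp Require Import all_boot all_order all_algebra.
From mathcomp Require Import all_classical all_reals all_analysis.
From mathcomp Require Import ring lra measurable_realfun.
Import Order.TTheory GRing.Theory Num.Theory.
Import numFieldTopology.Exports numFieldNormedType.Exports.
Set Implicit Arguments. Unset Strict Implicit. Unset Printing Implicit Defensive.
Local Open Scope classical_set_scope.
Local Open Scope ring_scope.

(* The Jacobians of g with respect to p, beta_1 and beta_0 are arrow matrices: row k has one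
   coefficient a in column k+1 and one coefficient b_k in column 0, hence
   |v J|^2 = (sum_k v_k b_k)^2 + a^2 |v|^2.  As S = sum_i J_i Sigma_i J_i' with diagonal
   Sigma_i, the quotient v S v' / |v|^2 is at least eps (a_2^2 + a_3^2), since the
   Sigma_beta weights are at least eps and the diagonal coefficients a_2, a_3 of the two beta
   Jacobians determine (c_mu, c_rho); it is at most 3 D (K+1) B^2, where D bounds all weights
   (the 2+delta moment bounds the variances, probabilities stay eps away from 0 and 1) and
   B bounds all coefficients (theta ranges over a compact set, so lambda = c' theta and
   beta_F = A_F theta are bounded).  Every eigenvalue of S is such a quotient. *)

Definition qform (R : pzRingType) n (A : 'M[R]_n) (v : 'rV[R]_n) : R := (v *m A *m v^T) 0 0.

Lemma qformD (R : pzRingType) n (A B : 'M[R]_n) v : qform (A + B) v = qform A v + qform B v.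
Proof. by rewrite /qform mulmxDr mulmxDl mxE. Qed.

Section SquareSums.
Variable R : realFieldType.

Lemma sqr_sum_le n (x : 'I_n -> R) : (\sum_i x i) ^+ 2 <= n%:R * \sum_i x i ^+ 2.
Proof.
have amgm i j : 2 * (x i * x j) <= x i ^+ 2 + x j ^+ 2.
  by have := sqr_ge0 (x i - x j); rewrite sqrrB; lra.
have : 2 * (\sum_i x i) ^+ 2 <= \sum_i \sum_j (x i ^+ 2 + x j ^+ 2).
  rewrite expr2 mulr_suml mulr_sumr; apply: ler_sum => i _.
  rewrite mulr_sumr mulr_sumr; apply: ler_sum => j _; exact: amgm.
have -> : \sum_i \sum_j (x i ^+ 2 + x j ^+ 2) = 2 * (n%:R * \sum_i x i ^+ 2).
  under eq_bigr do rewrite big_split /= sumr_const card_ord.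
  by rewrite big_split /= sumr_const card_ord sumrMnl -!(mulr_natr (\sum_i _)); ring.
by rewrite ler_pM2l.
Qed.

Lemma sumr_sqr_gt0 n (v : 'rV[R]_n) : v != 0 -> 0 < \sum_k v 0 k ^+ 2.
Proof.
move=> vnz; rewrite lt_def sumr_ge0 ?andbT => [|k _]; last exact: sqr_ge0.
apply: contra vnz => /eqP /psumr_eq0P sv0; apply/eqP/rowP => k.
by rewrite mxE; apply/eqP; rewrite -sqrf_eq0 sv0 // => i _; exact: sqr_ge0.
Qed.

Lemma eigenvalue_rayleigh n (A : 'M[R]_n) (lo hi a : R) :
  (forall v : 'rV_n, lo * \sum_k v 0 k ^+ 2 <= qform A v <= hi * \sum_k v 0 k ^+ 2) ->
  eigenvalue A a -> lo <= a <= hi.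
Proof.
move=> rayleigh /eigenvalueP [v vA vnz].
have quad : qform A v = a * \sum_k v 0 k ^+ 2.
  rewrite /qform vA -scalemxAl mxE mxE; congr (_ * _).
  by apply: eq_bigr => k _; rewrite mxE expr2.
have s_gt0 := sumr_sqr_gt0 vnz.
by move: (rayleigh v); rewrite quad !ler_pM2r.
Qed.

Lemma sqr_le_of_norm_le (x B : R) : `|x| <= B -> x ^+ 2 <= B ^+ 2.
Proof. by move=> xB; rewrite -real_normK ?num_real //; have := normr_ge0 x; nra. Qed.
End SquareSums.

Definition arrow_mx (R : pzRingType) (K : nat) (al : R) (be : 'I_K -> R)
    : 'M[R]_(K, K.+1) :=
  \matrix_(k, l) (if lift ord0 k == l then al else if ord0 == l then be k else 0).

Section ArrowForms.
Variables (R : realFieldType) (K : nat).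
Implicit Types (v : 'rV[R]_K) (d : 'rV[R]_K.+1) (be : 'I_K -> R).

Lemma qform_sandwich_diag v (J : 'M[R]_(K, K.+1)) d :
  qform (J *m diag_mx d *m J^T) v = \sum_l d 0 l * (v *m J) 0 l ^+ 2.
Proof.
rewrite /qform (_ : v *m _ *m _ = v *m J *m diag_mx d *m (v *m J)^T).
  by rewrite mul_mx_diag mxE; apply: eq_bigr => l _; rewrite !mxE; ring.
by rewrite trmx_mul !mulmxA.
Qed.

Lemma mul_arrow_mx0 v al be : (v *m arrow_mx al be) 0 ord0 = \sum_k v 0 k * be k.
Proof. by rewrite mxE; apply: eq_bigr => k _; rewrite mxE lift_eqF eqxx. Qed.

Lemma mul_arrow_mx_lift v al be k :
  (v *m arrow_mx al be) 0 (lift ord0 k) = v 0 k * al.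
Proof.
rewrite mxE (bigD1 k) //= big1 ?addr0 => [|j /negbTE jk]; first by rewrite mxE eqxx.
by rewrite mxE (inj_eq (@lift_inj _ ord0)) jk eq_liftF mulr0.
Qed.

Lemma sumr_sqr_mul_arrow_mx v al be :
  \sum_l (v *m arrow_mx al be) 0 l ^+ 2
    = (\sum_k v 0 k * be k) ^+ 2 + al ^+ 2 * \sum_k v 0 k ^+ 2.
Proof.
rewrite big_ord_recl mul_arrow_mx0 mulr_sumr; congr (_ + _).
by apply: eq_bigr => k _; rewrite mul_arrow_mx_lift exprMn mulrC.
Qed.

Lemma qform_arrow_ge v al be d e : 0 <= e -> (forall l, e <= d 0 l) ->
  e * al ^+ 2 * \sum_k v 0 k ^+ 2
    <= qform (arrow_mx al be *m diag_mx d *m (arrow_mx al be)^T) v.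
Proof.
move=> e_ge0 d_ge; rewrite qform_sandwich_diag.
apply: (@le_trans _ _ (e * \sum_l (v *m arrow_mx al be) 0 l ^+ 2)).
  by rewrite -mulrA sumr_sqr_mul_arrow_mx ler_wpM2l // lerDr sqr_ge0.
rewrite mulr_sumr; apply: ler_sum => l _; apply: ler_wpM2r => //; exact: sqr_ge0.
Qed.

Lemma qform_arrow_le v al be d D B :
  (forall l, 0 <= d 0 l <= D) -> `|al| <= B -> (forall k, `|be k| <= B) ->
  qform (arrow_mx al be *m diag_mx d *m (arrow_mx al be)^T) v
    <= D * (K.+1%:R * B ^+ 2) * \sum_k v 0 k ^+ 2.
Proof.
move=> d_bd al_le be_le; rewrite qform_sandwich_diag -mulrA.
have D_ge0 : 0 <= D by have /andP[d0 dD] := d_bd ord0; exact: le_trans dD.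
apply: (@le_trans _ _ (D * \sum_l (v *m arrow_mx al be) 0 l ^+ 2)).
  rewrite mulr_sumr; apply: ler_sum => l _; apply: ler_wpM2r; first exact: sqr_ge0.
  by case/andP: (d_bd l).
apply: ler_wpM2l => //; rewrite sumr_sqr_mul_arrow_mx.
have s_ge0 : 0 <= \sum_k v 0 k ^+ 2 by apply: sumr_ge0 => k _; exact: sqr_ge0.
have be_part : (\sum_k v 0 k * be k) ^+ 2 <= K%:R * (B ^+ 2 * \sum_k v 0 k ^+ 2).
  apply: le_trans (sqr_sum_le _) _; apply: ler_wpM2l => //.
  rewrite mulr_sumr; apply: ler_sum => k _; rewrite exprMn mulrC.
  by apply: ler_wpM2r; [exact: sqr_ge0 | exact: sqr_le_of_norm_le].
have := sqr_le_of_norm_le al_le; rewrite -natr1; nra.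
Qed.
End ArrowForms.

Section ArrowSums.
Variables (R : realFieldType) (K : nat) (v : 'rV[R]_K).
Variables (al1 al2 al3 : R) (be1 be2 be3 : 'I_K -> R) (d1 d2 d3 : 'rV[R]_K.+1).
Let J1 := arrow_mx al1 be1.
Let J2 := arrow_mx al2 be2.
Let J3 := arrow_mx al3 be3.

Lemma qform_arrow3_ge e : 0 <= e ->
  (forall l, 0 <= d1 0 l) -> (forall l, e <= d2 0 l) -> (forall l, e <= d3 0 l) ->
  e * (al2 ^+ 2 + al3 ^+ 2) * \sum_k v 0 k ^+ 2 <=
  qform (J1 *m diag_mx d1 *m J1^T + J2 *m diag_mx d2 *m J2^T + J3 *m diag_mx d3 *m J3^T) v.
Proof.
move=> e_ge0 d1_ge d2_ge d3_ge; rewrite !qformD /J1 /J2 /J3.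
have := qform_arrow_ge v al1 be1 (lexx 0) d1_ge.
have := qform_arrow_ge v al2 be2 e_ge0 d2_ge.
have := qform_arrow_ge v al3 be3 e_ge0 d3_ge.
rewrite mul0r; lra.
Qed.

Lemma qform_arrow3_le D B :
  (forall l, 0 <= d1 0 l <= D) -> (forall l, 0 <= d2 0 l <= D) ->
  (forall l, 0 <= d3 0 l <= D) ->
  `|al1| <= B -> `|al2| <= B -> `|al3| <= B ->
  (forall k, `|be1 k| <= B) -> (forall k, `|be2 k| <= B) -> (forall k, `|be3 k| <= B) ->
  qform (J1 *m diag_mx d1 *m J1^T + J2 *m diag_mx d2 *m J2^T + J3 *m diag_mx d3 *m J3^T) v
    <= 3 * D * (K.+1%:R * B ^+ 2) * \sum_k v 0 k ^+ 2.
Proof.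
move=> d1_bd d2_bd d3_bd al1_le al2_le al3_le be1_le be2_le be3_le.
rewrite !qformD /J1 /J2 /J3.
have := qform_arrow_le v d1_bd al1_le be1_le.
have := qform_arrow_le v d2_bd al2_le be2_le.
have := qform_arrow_le v d3_bd al3_le be3_le.
lra.
Qed.
End ArrowSums.

Lemma derive1_affine (R : realType) (f : R -> R) (a b x : R) :
  (forall t, f t = a * t + b) -> derive1 f x = a.
Proof.
move=> f_affine; have -> : f = (a \*: id + cst b)%R by apply: funext => t; rewrite f_affine.
rewrite derive1E.
have : is_derive x (1 : R) (a \*: id + cst b)%R (a *: 1 + 0) by apply: is_deriveD.
by move=> ?; rewrite derive_val addr0 /GRing.scale /= mulr1.
Qed.

Lemma compact_mx_entries_bounded (R : realType) m n (A : set 'M[R]_(m, n)) :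
  compact A -> exists2 T : R, 0 <= T & forall x, A x -> forall i j, `|x i j| <= T.
Proof.
move=> /compact_bounded [M [_ HM]]; exists (Num.max 0 (M + 1)) => [|x Ax i j].
  by rewrite le_max lexx.
have x_le : `|x| <= Num.max 0 (M + 1) by apply: HM => //; rewrite lt_max ltrDl ltr01 orbT.
apply: le_trans x_le; rewrite [`|x|]mx_normrE.
exact: (le_bigmax _ (fun ij => `|x ij.1 ij.2|) (i, j)).
Qed.

Lemma normr_mulmx_col_le (R : realDomainType) m n (A : 'M[R]_(m, n)) (x : 'cV[R]_n)
    (a T : R) i :
  (forall j, `|A i j| <= a) -> (forall j, `|x j 0| <= T) -> 0 <= T ->
  `|(A *m x) i 0| <= n%:R * (a * T).
Proof.
move=> A_le x_le T_ge0; rewrite mxE; apply: le_trans (ler_norm_sum _ _ _) _.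
rewrite mulr_natl -[n in _ *+ n]card_ord -sumr_const.
apply: ler_sum => j _.
by rewrite normrM ler_pM.
Qed.

Section Variance.
Variable R : realType.

Lemma sqr_le_powR (delta y : R) : 0 < delta -> y ^+ 2 <= 1 + `|y| `^ (2 + delta).
Proof.
move=> delta_gt0; have := powR_ge0 `|y| (2 + delta).
have [y_le1|y_gt1] := lerP `|y| 1.
  have : y ^+ 2 <= 1 by rewrite -real_normK ?num_real //; have := normr_ge0 y; nra.
  lra.
have : `|y| `^ 2 <= `|y| `^ (2 + delta) by apply: ler_powR; lra.
have : `|y| `^ 2 = y ^+ 2 by rewrite -[2]/(2%:R) powR_mulrn // real_normK ?num_real.
lra.
Qed.

Lemma variance_le_moment (mu : probability R R) (b delta zeta : R) : 0 < delta ->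
  (\int[mu]_y ((`|y| `^ (2 + delta))%:E) <= zeta%:E)%E ->
  (\int[mu]_y (((y - b) ^+ 2)%:E) <= (2 + 2 * b ^+ 2 + 2 * zeta)%:E)%E.
Proof.
move=> delta_gt0 moment_le.
have mpow : measurable_fun [set: R] (EFin \o (fun y : R => `|y| `^ (2 + delta))).
  apply/measurable_EFinP.
  have -> : (fun y : R => `|y| `^ (2 + delta))
      = (fun x => x `^ (2 + delta)) \o (@Num.norm _ R) by [].
  by apply: measurableT_comp; [exact: measurable_powR | exact: normr_measurable].
have b_ge0 : (0 <= 2 + 2 * b ^+ 2 :> R) by have := sqr_ge0 b; lra.
pose g (y : R) := ((2 + 2 * b ^+ 2)%:E + 2%:E * (`|y| `^ (2 + delta))%:E)%E.
have le_g : (\int[mu]_y (((y - b) ^+ 2)%:E) <= \int[mu]_y g y)%E.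
  apply: ge0_le_integral => //.
  - by move=> y _; rewrite lee_fin sqr_ge0.
  - by apply/measurable_EFinP; apply: measurable_funX; apply: measurable_funB.
  - by apply: emeasurable_funD => //; exact: emeasurable_funM.
  move=> y _; rewrite /g -EFinM -EFinD lee_fin.
  by have := sqr_le_powR y delta_gt0; have := sqr_ge0 (y + b); nra.
apply: le_trans le_g _; rewrite /g ge0_integralD //.
all: try by move=> y _; rewrite ?lee_fin // mule_ge0 // lee_fin powR_ge0.
2: exact: emeasurable_funM.
rewrite integral_cst // ge0_integralZl //.
rewrite [X in (_ <= X)%E]EFinD EFinM; apply: leeD; last exact: lee_wpmul2l.
by rewrite -[X in (_ <= X)%E]mule1 lee_wpmul2l ?lee_fin // sprobability_setT.
Qed.
End Variance.

Section Jacobians.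
Variables (R : realType) (K : nat) (cmu crho lam : R) (p b1 b0 : 'I_K.+1 -> R).

(* [g_k] is affine in each coordinate; split on whether the coordinate is [z_0] or [z_(j+1)]. *)
Local Ltac gk_affine l :=
  rewrite /gk /Delta_mu /Delta_rho /upd /=;
  case: (unliftP ord0 l) => [j ->|->];
  rewrite ?eq_liftF ?lift_eqF ?eqxx ?(inj_eq (@lift_inj _ ord0));
  [case: (_ == _) |]; ring.

Lemma Jp_arrow : Jp cmu crho lam p b1 b0 =
  arrow_mx (lam - cmu * (b1 ord0 - b0 ord0))
           (fun k => cmu * (b1 (lift ord0 k) - b0 (lift ord0 k)) - lam).
Proof.
apply/matrixP => k l; rewrite !mxE.
apply: (derive1_affine (b := gk cmu crho k lam (upd p l 0) b1 b0)) => t.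
gk_affine l.
Qed.

Lemma Jb1_arrow : Jb1 cmu crho lam p b1 b0 =
  arrow_mx (cmu * (p ord0 - 1) + (- 2) * crho)
           (fun k => cmu * (1 - p (lift ord0 k)) + 2 * crho).
Proof.
apply/matrixP => k l; rewrite !mxE.
apply: (derive1_affine (b := gk cmu crho k lam p (upd b1 l 0) b0)) => t.
gk_affine l.
Qed.

Lemma Jb0_arrow : Jb0 cmu crho lam p b1 b0 =
  arrow_mx (cmu * (- p ord0) + 2 * crho)
           (fun k => cmu * p (lift ord0 k) + (- 2) * crho).
Proof.
apply/matrixP => k l; rewrite !mxE.
apply: (derive1_affine (b := gk cmu crho k lam p b1 (upd b0 l 0))) => t.
gk_affine l.
Qed.
End Jacobians.

Lemma normr_Amx_le1 (R : realType) K (p : 'I_K.+1 -> R) :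
  (forall l, 0 <= p l <= 1) -> forall i j, `|Amx p i j| <= 1.
Proof.
move=> p01 i j; have lam_le (x : R) : 0 <= x <= 1 -> `|x / 2| <= 1 /\ `|(x - 1) / 2| <= 1.
  by move=> /andP[x0 x1]; split; rewrite ler_norml; apply/andP; split; lra.
rewrite /Amx; case: (split_ordP i) => i' ->; case: (split_ordP j) => j' ->;
  rewrite ?block_mxEul ?block_mxEur ?block_mxEdl ?block_mxEdr !mxE ?normr0 //;
  case: (j' == ord0); rewrite ?normr1 //; case: (lam_le _ (p01 i')) => //.
Qed.

Lemma normr_betaF_le (R : realType) K (F : mte_dist R K) (theta : 'cV[R]_(2 + 2)) T :
  Amx (pZ F) *m theta = betavec F -> (forall l, 0 <= pZ F l <= 1) ->
  (forall j, `|theta j 0| <= T) -> 0 <= T ->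
  forall d l, `|betaF F d l| <= 4 * T.
Proof.
move=> Atheta p01 theta_le T_ge0 d l.
have entry_le i : `|(Amx (pZ F) *m theta) i 0| <= 4 * T.
  apply: le_trans (normr_mulmx_col_le (a := 1) _ theta_le T_ge0) _; last by rewrite mul1r.
  by move=> j; apply: normr_Amx_le1.
case: d.
- by have := entry_le (lshift _ l); rewrite Atheta /betavec col_mxEu mxE.
- by have := entry_le (rshift _ l); rewrite Atheta /betavec col_mxEd mxE.
Qed.

Lemma normr_lamc_le (R : realType) (cmu crho : R) (theta : 'cV[R]_(2 + 2)) T :
  (forall j, `|theta j 0| <= T) -> 0 <= T ->
  `|lamc cmu crho theta| <= 4 * ((`|cmu| + `|crho|) * T).
Proof.
move=> theta_le T_ge0; apply: normr_mulmx_col_le => // j.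
have := normr_ge0 cmu; have := normr_ge0 crho.
rewrite mxE /cvec; case: (split_ordP j) => j' ->;
  rewrite ?col_mxEu ?col_mxEd mxE; case: (j' == ord0); rewrite ?normrN; lra.
Qed.

Lemma sigma2F_bounds (R : realType) K (F : mte_dist R K) (delta zeta eps : R) d l :
  0 < delta -> (momentF F delta d l <= zeta%:E)%E ->
  (eps%:E <= \int[lawY F d l]_y (((y - betaF F d l) ^+ 2)%:E))%E ->
  eps <= sigma2F F d l <= 2 + 2 * betaF F d l ^+ 2 + 2 * zeta.
Proof.
move=> delta_gt0 moment_le var_ge.
have := variance_le_moment (betaF F d l) delta_gt0 moment_le.
move: var_ge; rewrite /sigma2F.
by case: (\int[_]_y _)%E => [r /= |//|//]; rewrite !lee_fin => -> ->.
Qed.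

Section Coefficients.
Variables (R : realType) (cmu crho : R).

Lemma normr_lam_sub_le (lam x y T : R) : 0 <= T ->
  `|lam| <= 4 * ((`|cmu| + `|crho|) * T) -> `|x| <= 4 * T -> `|y| <= 4 * T ->
  `|lam - cmu * (x - y)| <= (`|cmu| + `|crho|) * (12 * T + 2).
Proof.
move=> T_ge0 lam_le x_le y_le; apply: le_trans (ler_normB _ _) _.
have : `|x - y| <= 8 * T by apply: le_trans (ler_normB _ _) _; lra.
have := normr_ge0 cmu; have := normr_ge0 crho; have := normr_ge0 (x - y).
rewrite normrM; nra.
Qed.

Lemma normr_cmu_crho_le (u s T : R) : 0 <= T -> `|u| <= 1 -> `|s| <= 2 ->
  `|cmu * u + s * crho| <= (`|cmu| + `|crho|) * (12 * T + 2).
Proof.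
move=> T_ge0 u_le s_le; apply: le_trans (ler_normD _ _) _.
have := normr_ge0 cmu; have := normr_ge0 crho; have := normr_ge0 u; have := normr_ge0 s.
rewrite !normrM; nra.
Qed.

(* [c_mu = - (a2 + a3)] and [2 c_rho = (1 - p) a3 - p a2]; by Cauchy-Schwarz and
   [p^2 + (1 - p)^2 <= 1] the latter gives [4 c_rho^2 <= a2^2 + a3^2]. *)
Lemma arrow_coef_sqr_ge (p : R) : 0 <= p <= 1 ->
  (cmu ^+ 2 + crho ^+ 2) / 4
    <= (cmu * (p - 1) + (- 2) * crho) ^+ 2 + (cmu * (- p) + 2 * crho) ^+ 2.
Proof.
move=> /andP[p_ge0 p_le1].
set a2 := cmu * (p - 1) + _; set a3 := cmu * (- p) + _.
have cmuE : cmu = - (a2 + a3) by rewrite /a2 /a3; ring.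
have crhoE : 2 * crho = - (p * a2 - (1 - p) * a3) by rewrite /a2 /a3; ring.
clearbody a2 a3.
have s_ge0 : 0 <= a2 ^+ 2 + a3 ^+ 2 by rewrite addr_ge0 ?sqr_ge0.
have cmu_le : cmu ^+ 2 <= 2 * (a2 ^+ 2 + a3 ^+ 2).
  by rewrite cmuE sqrrN; have := sqr_ge0 (a2 - a3); nra.
have crho_le : 4 * crho ^+ 2 <= a2 ^+ 2 + a3 ^+ 2.
  have rot : (p * a2 - (1 - p) * a3) ^+ 2 + (p * a3 + (1 - p) * a2) ^+ 2
      = (p ^+ 2 + (1 - p) ^+ 2) * (a2 ^+ 2 + a3 ^+ 2) by ring.
  have : (p ^+ 2 + (1 - p) ^+ 2) * (a2 ^+ 2 + a3 ^+ 2) <= a2 ^+ 2 + a3 ^+ 2.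
    by rewrite ler_piMl //; nra.
  have := sqr_ge0 (p * a3 + (1 - p) * a2).
  have -> : 4 * crho ^+ 2 = (p * a2 - (1 - p) * a3) ^+ 2 by rewrite -[RHS]sqrrN -crhoE; ring.
  lra.
lra.
Qed.
End Coefficients.

(* [2 + 2 (4 T)^2 + 2 zeta] bounds the variances and [eps^2] bounds [q_F(d, z)] from below. *)
Definition weight_bound (R : realType) (eps zeta T : R) :=
  (2 + 32 * T ^+ 2 + 2 * zeta) / eps ^+ 2.

Definition jac_bound (R : realType) (cmu crho T : R) := (`|cmu| + `|crho|) * (12 * T + 2).

Lemma propensity_weight_bounds (R : realType) (eps C p q : R) :
  0 < eps <= 1 -> 1 <= C -> 0 <= p <= 1 -> eps <= q ->
  0 <= p * (1 - p) / q <= C / eps ^+ 2.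
Proof.
move=> /andP[eps_gt0 eps_le1] C_ge1 /andP[p_ge0 p_le1] q_ge.
have q_gt0 : 0 < q by lra.
rewrite divr_ge0 ?mulr_ge0 ?subr_ge0 ?(ltW q_gt0) //= ler_pdivrMr //.
have W_eps : C / eps ^+ 2 * eps ^+ 2 = C by rewrite divfK // expf_neq0 // gt_eqF.
have W_ge0 : 0 <= C / eps ^+ 2 by rewrite divr_ge0 ?sqr_ge0 //; lra.
have : C / eps ^+ 2 * eps ^+ 2 <= C / eps ^+ 2 * q.
  by rewrite ler_wpM2l // expr2; nra.
nra.
Qed.

Lemma outcome_weight_bounds (R : realType) (eps C s q : R) :
  0 < eps -> eps <= s <= C -> eps ^+ 2 <= q <= 1 -> eps <= s / q <= C / eps ^+ 2.
Proof.
move=> eps_gt0 /andP[s_ge s_le] /andP[q_ge q_le1].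
have q_gt0 : 0 < q by apply: lt_le_trans q_ge; rewrite exprn_gt0.
rewrite ler_pdivlMr // ler_pdivrMr //.
have W_eps : C / eps ^+ 2 * eps ^+ 2 = C by rewrite divfK // expf_neq0 // gt_eqF.
have W_ge0 : 0 <= C / eps ^+ 2 by rewrite divr_ge0 ?sqr_ge0 //; lra.
have W_q : C / eps ^+ 2 * eps ^+ 2 <= C / eps ^+ 2 * q by rewrite ler_wpM2l.
apply/andP; split; nra.
Qed.

Lemma qDZ_bounds (R : realType) K (F : mte_dist R K) (eps : R) d l : 0 < eps ->
  eps <= pZ F l <= 1 - eps -> eps <= qZ F l <= 1 - eps -> eps ^+ 2 <= qDZ F d l <= 1.
Proof.
by move=> ? /andP[? ?] /andP[? ?]; case: d; rewrite /qDZ expr2; apply/andP; split; nra.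
Qed.

Section ParameterSpace.
Variables (R : realType) (K : nat) (delta zeta eps : R) (Theta : set 'cV[R]_(2 + 2)).
Variables (T : R) (theta : 'cV[R]_(2 + 2)) (F : mte_dist R K).

Lemma Sigma_p_bounds l :
  0 < zeta -> 0 < eps < 1 / 2 -> inP delta zeta eps Theta theta F ->
  0 <= (\row_l (pZ F l * (1 - pZ F l) / qZ F l)) 0 l <= weight_bound eps zeta T.
Proof.
move=> zeta_gt0 /andP[eps_gt0 eps_lt].
move=> [[_ [_ p01]] [_ [_ [_ [_ [_ [/(_ l)/andP[q_ge _] _]]]]]]].
rewrite mxE; apply: propensity_weight_bounds q_ge; last exact: p01.
  by rewrite eps_gt0 /=; lra.
by have := sqr_ge0 T; lra.
Qed.

Lemma Sigma_b_bounds d l :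
  0 < delta -> 0 < eps < 1 / 2 -> 0 <= T -> (forall j, `|theta j 0| <= T) ->
  inP delta zeta eps Theta theta F ->
  eps <= (\row_l (sigma2F F d l / qDZ F d l)) 0 l <= weight_bound eps zeta T.
Proof.
move=> delta_gt0 /andP[eps_gt0 _] T_ge0 theta_le
  [[_ [_ p01]] [_ [_ [Atheta [mom [pb [qb var]]]]]]].
rewrite mxE; apply: outcome_weight_bounds => //; last exact: qDZ_bounds.
have /andP[-> sigma_le] := sigma2F_bounds delta_gt0 (mom d l) (var d l).
have := sqr_le_of_norm_le (normr_betaF_le Atheta p01 theta_le T_ge0 d l).
rewrite /= expr2; lra.
Qed.
End ParameterSpace.

Lemma Smat_qform_ge (R : realType) K (delta zeta eps : R) (Theta : set 'cV[R]_(2 + 2))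
    (cmu crho T : R) (theta : 'cV[R]_(2 + 2)) (F : mte_dist R K) (v : 'rV[R]_K) :
  0 < delta -> 0 < zeta -> 0 < eps < 1 / 2 -> 0 <= T -> (forall j, `|theta j 0| <= T) ->
  inP delta zeta eps Theta theta F ->
  eps * ((cmu ^+ 2 + crho ^+ 2) / 4) * \sum_k v 0 k ^+ 2 <= qform (Smat cmu crho theta F) v.
Proof.
move=> delta_gt0 zeta_gt0 eps_bd T_ge0 theta_le PF.
have [[_ [_ p01]] _] := PF.
rewrite /Smat /= Jp_arrow Jb1_arrow Jb0_arrow /Sigma_p /Sigma_b.
have eps_ge0 : 0 <= eps by case/andP: eps_bd => /ltW.
apply: le_trans (qform_arrow3_ge v _ _ _ _ _ _ eps_ge0 _ _ _) => [|l|l|l].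
- apply: ler_wpM2r; first by apply: sumr_ge0 => k _; exact: sqr_ge0.
  by apply: ler_wpM2l => //; exact: arrow_coef_sqr_ge.
- by case/andP: (Sigma_p_bounds T l zeta_gt0 eps_bd PF).
- by case/andP: (Sigma_b_bounds true l delta_gt0 eps_bd T_ge0 theta_le PF).
- by case/andP: (Sigma_b_bounds false l delta_gt0 eps_bd T_ge0 theta_le PF).
Qed.

Lemma Smat_qform_le (R : realType) K (delta zeta eps : R) (Theta : set 'cV[R]_(2 + 2))
    (cmu crho T : R) (theta : 'cV[R]_(2 + 2)) (F : mte_dist R K) (v : 'rV[R]_K) :
  0 < delta -> 0 < zeta -> 0 < eps < 1 / 2 -> 0 <= T -> (forall j, `|theta j 0| <= T) ->
  inP delta zeta eps Theta theta F ->
  qform (Smat cmu crho theta F) v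
    <= 3 * weight_bound eps zeta T * (K.+1%:R * jac_bound cmu crho T ^+ 2)
         * \sum_k v 0 k ^+ 2.
Proof.
move=> delta_gt0 zeta_gt0 eps_bd T_ge0 theta_le PF.
have [[_ [_ p01]] [_ [_ [Atheta _]]]] := PF.
have beta_le := normr_betaF_le Atheta p01 theta_le T_ge0.
have lam_le := normr_lamc_le cmu crho theta_le T_ge0.
have unit_le (x : R) : 0 <= x <= 1 -> `|x| <= 1 /\ `|x - 1| <= 1.
  by move=> /andP[? ?]; split; rewrite ler_norml; apply/andP; split; lra.
have two_le : `|2 : R| <= 2 /\ `|- 2 : R| <= 2 by rewrite normrN ger0_norm.
have W_bd d l : 0 <= (\row_l (sigma2F F d l / qDZ F d l)) 0 l <= weight_bound eps zeta T.
  have /andP[eps_le ->] := Sigma_b_bounds d l delta_gt0 eps_bd T_ge0 theta_le PF.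
  by case/andP: eps_bd => /ltW eps_ge0 _; rewrite (le_trans eps_ge0 eps_le).
rewrite /Smat /= Jp_arrow Jb1_arrow Jb0_arrow /Sigma_p /Sigma_b.
apply: qform_arrow3_le => [l|l|l||||k|k|k]; rewrite /jac_bound.
- exact: (Sigma_p_bounds T l zeta_gt0 eps_bd PF).
- exact: W_bd.
- exact: W_bd.
- exact: normr_lam_sub_le.
- by apply: normr_cmu_crho_le; [|case: (unit_le _ (p01 ord0))|case: two_le].
- apply: normr_cmu_crho_le => //; last by case: two_le.
  by rewrite normrN; case: (unit_le _ (p01 ord0)).
- by rewrite distrC; apply: normr_lam_sub_le.
- apply: normr_cmu_crho_le => //; last by case: two_le.
  by rewrite distrC; case: (unit_le _ (p01 (lift ord0 k))).
- apply: normr_cmu_crho_le => //; last by case: two_le.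
  by case: (unit_le _ (p01 (lift ord0 k))).
Qed.

Theorem lemmaA2 (R : realType) (K : nat) (delta zeta eps : R)
    (Theta : set 'cV[R]_(2 + 2)) (cmu crho : R) :
  0 < delta -> 0 < zeta -> 0 < eps < 1 / 2 ->
  compact Theta -> Theta° !=set0 ->
  (cmu, crho) != (0, 0) ->
  exists lo hi : R, 0 < lo /\
    forall (theta : 'cV[R]_(2 + 2)) (F : mte_dist R K),
      inP delta zeta eps Theta theta F ->
      forall a : R, eigenvalue (Smat cmu crho theta F) a -> lo <= a <= hi.
Proof.
move=> delta_gt0 zeta_gt0 eps_bd Theta_compact _; rewrite xpair_eqE negb_and => c_neq0.
have [T T_ge0 Theta_le] := compact_mx_entries_bounded Theta_compact.
exists (eps * ((cmu ^+ 2 + crho ^+ 2) / 4)).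
exists (3 * weight_bound eps zeta T * (K.+1%:R * jac_bound cmu crho T ^+ 2)); split.
  have c_gt0 : 0 < cmu ^+ 2 + crho ^+ 2.
    by rewrite lt_def paddr_eq0 ?sqr_ge0 // !sqrf_eq0 negb_and c_neq0 addr_ge0 ?sqr_ge0.
  by case/andP: eps_bd => eps_gt0 _; rewrite mulr_gt0 ?divr_gt0.
move=> theta F PF a; apply: eigenvalue_rayleigh => v.
have theta_le j : `|theta j 0| <= T.
  by case: PF => _ [_ [/interior_subset theta_in _]]; exact: Theta_le.
by rewrite (Smat_qform_ge cmu crho v delta_gt0 zeta_gt0 eps_bd T_ge0 theta_le PF)
           (Smat_qform_le cmu crho v delta_gt0 zeta_gt0 eps_bd T_ge0 theta_le PF).
Qed.
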